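(* Let $\mathcal{H}$ be a complex Hilbert space and $T\in\mathbb{B}(\mathcal{H})$. Then $$\Omega(T) \leq \min\left\{\sqrt{\|TT^* + T^*T\|},\ \sqrt{\|T\|^2 + w(T^2)}\right\}.$$
   Context: $\mathbb{B}(\mathcal{H})$ is the algebra of bounded linear operators on $\mathcal{H}$, $\|\cdot\|$ the usual operator norm, and $w(T)=\sup\{|\langle Tx,x\rangle|:\|x\|=1\}$ the numerical radius. Dragomir's norm is $\Omega(T)=\sup\{\|\zeta T+\eta T^*\|:\ \zeta,\eta\in\mathbb{C},\ |\zeta|^2+|\eta|^2\le 1\}$. *)

From HB Require Import structures.
From mathcomp Require Import all_boot all_order all_algebra.
From mathcomp Require Import complex.
From mathcomp Require Import classical_sets reals.
Set Implicit Arguments. Unset Strict Implicit. Unset Printing Implicit Defensive.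
Import Order.TTheory GRing.Theory Num.Theory.
Local Open Scope ring_scope.
Local Open Scope classical_set_scope.

Section Hilbert.
Variable R : realType.
Local Notation C := (R[i]).

Definition cabs (z : C) : R := Num.sqrt (complex.Re z ^+ 2 + complex.Im z ^+ 2).

Variable V : lmodType C.
Variable ip : V -> V -> C.   (* inner product, linear in the first argument *)

Definition inner_product_axioms : Prop :=
  [/\ (forall (a : C) (x y z : V), ip (a *: x + y) z = a * ip x z + ip y z),
      (forall x y : V, ip y x = Num.conj (ip x y)),
      (forall x : V, complex.Im (ip x x) = 0 /\ 0 <= complex.Re (ip x x)) &
      (forall x : V, ip x x = 0 -> x = 0)].

Definition hnorm (x : V) : R := Num.sqrt (complex.Re (ip x x)).

Definition hcomplete : Prop :=
  forall u : nat -> V,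
    (forall e : R, 0 < e -> exists N : nat, forall m n : nat,
        (N <= m)%N -> (N <= n)%N -> hnorm (u m - u n) < e) ->
    exists l : V, forall e : R, 0 < e -> exists N : nat, forall n : nat,
        (N <= n)%N -> hnorm (u n - l) < e.

Definition hilbert_space : Prop := inner_product_axioms /\ hcomplete.

Definition bounded_operator (T : V -> V) : Prop :=
  [/\ (forall x y : V, T (x + y) = T x + T y),
      (forall (a : C) (x : V), T (a *: x) = a *: T x) &
      exists M : R, forall x : V, hnorm (T x) <= M * hnorm x].

Definition is_adjoint (T Ts : V -> V) : Prop :=
  forall x y : V, ip (T x) y = ip x (Ts y).

Definition opnorm (T : V -> V) : R :=
  sup [set hnorm (T x) | x in [set x : V | hnorm x <= 1]].

Definition numrad (T : V -> V) : R :=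
  sup [set cabs (ip (T x) x) | x in [set x : V | hnorm x = 1]].

(* Dragomir's norm Omega(T) = sup { ||zeta T + eta T^*|| : |zeta|^2+|eta|^2 <= 1 } *)
Definition dragomir (T Ts : V -> V) : R :=
  sup [set opnorm (fun x => p.1 *: T x + p.2 *: Ts x)
      | p in [set p : C * C | cabs p.1 ^+ 2 + cabs p.2 ^+ 2 <= 1]].

End Hilbert.

From HB Require Import structures.
From mathcomp Require Import all_boot all_order all_algebra.
From mathcomp Require Import complex.
From mathcomp Require Import classical_sets boolp reals.
From mathcomp Require Import ring lra.
Import Order.TTheory GRing.Theory Num.Theory.
Local Open Scope ring_scope.
Set Implicit Arguments.
Unset Strict Implicit.

(* Take |a|^2 + |b|^2 <= 1 and ||x|| <= 1, and write u = ||T x||, v = ||T* x||. Expanding,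
     ||a T x + b T* x||^2 <= |a|^2 u^2 + |b|^2 v^2 + 2 |a| |b| |<T x, T* x>|.
   By Cauchy-Schwarz and 2 |a| |b| u v <= |a|^2 v^2 + |b|^2 u^2 this is at most
   u^2 + v^2 = Re <(T T* + T* T) x, x> <= ||T T* + T* T||.
   Alternatively u, v <= ||T||, |<T x, T* x>| = |<T^2 x, x>| <= w(T^2) and 2 |a| |b| <= 1
   bound it by ||T||^2 + w(T^2). *)

Section ComplexModulus.
Variable R : realType.
Implicit Types z w : R[i].

Lemma cabsE z : (cabs z)%:C%C = `|z|.
Proof. by rewrite normc_def. Qed.

Lemma cabs_ge0 z : 0 <= cabs z.
Proof. exact: sqrtr_ge0. Qed.

Lemma cabsM z w : cabs (z * w) = cabs z * cabs w.
Proof. by apply: complexI; rewrite rmorphM /= !cabsE normrM. Qed.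

Lemma cabsJ z : cabs (Num.conj z) = cabs z.
Proof. by apply: complexI; rewrite !cabsE norm_conjC. Qed.

Lemma cabsN z : cabs (- z) = cabs z.
Proof. by apply: complexI; rewrite !cabsE normrN. Qed.

Lemma cabs0 : cabs (0 : R[i]) = 0.
Proof. by apply: complexI; rewrite cabsE normr0. Qed.

Lemma cabs_real (r : R) : cabs (r%:C)%C = `|r|.
Proof. by rewrite /cabs /= expr0n addr0 sqrtr_sqr. Qed.

Lemma Re_le_cabs z : complex.Re z <= cabs z.
Proof.
have [z0|z0] := lerP (complex.Re z) 0; first exact: le_trans z0 (cabs_ge0 z).
rewrite -[leLHS]gtr0_norm // -sqrtr_sqr ler_wsqrtr //.
by rewrite lerDl sqr_ge0.
Qed.

Lemma mulJc z : Num.conj z * z = ((cabs z ^+ 2)%:C)%C.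
Proof. by rewrite rmorphXn /= cabsE normCKC. Qed.

End ComplexModulus.

Section InnerProductSpace.
Variables (R : realType) (V : lmodType R[i]) (ip : V -> V -> R[i]).
Hypothesis ip_axioms : inner_product_axioms ip.
Implicit Types (a b : R[i]) (x y z u v : V).

Lemma ipDZl a x y z : ip (a *: x + y) z = a * ip x z + ip y z.
Proof. by case: ip_axioms. Qed.

Lemma ipC x y : ip y x = Num.conj (ip x y).
Proof. by case: ip_axioms. Qed.

Lemma ipDl x y z : ip (x + y) z = ip x z + ip y z.
Proof. by have := ipDZl 1 x y z; rewrite scale1r mul1r. Qed.

Lemma ip0l z : ip 0 z = 0.
Proof. by apply: (@addrI _ (ip 0 z)); rewrite -ipDl !addr0. Qed.

Lemma ipZl a x z : ip (a *: x) z = a * ip x z.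
Proof. by rewrite -[a *: x]addr0 ipDZl ip0l addr0. Qed.

Lemma ipDr x y z : ip z (x + y) = ip z x + ip z y.
Proof. by rewrite ipC ipDl rmorphD /= -!ipC. Qed.

Lemma ipZr a x z : ip z (a *: x) = Num.conj a * ip z x.
Proof. by rewrite ipC ipZl rmorphM /= -ipC. Qed.

Lemma ip0r z : ip z 0 = 0.
Proof. by rewrite ipC ip0l rmorph0. Qed.

Lemma hnorm_ge0 x : 0 <= hnorm ip x.
Proof. exact: sqrtr_ge0. Qed.

Lemma hnorm_sq x : hnorm ip x ^+ 2 = complex.Re (ip x x).
Proof. by case: ip_axioms => _ _ /(_ x) [_ ge0] _; rewrite sqr_sqrtr. Qed.

Lemma ip_self x : ip x x = ((hnorm ip x ^+ 2)%:C)%C.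
Proof.
rewrite hnorm_sq; case: ip_axioms => _ _ /(_ x) [].
by case: (ip x x) => ? ? /= ->.
Qed.

Lemma hnorm0 : hnorm ip 0 = 0.
Proof. by rewrite /hnorm ip0l sqrtr0. Qed.

Lemma hnorm_eq0 x : hnorm ip x = 0 -> x = 0.
Proof.
case: ip_axioms => _ _ _ definite hx0; apply: definite.
by rewrite ip_self hx0 expr0n.
Qed.

Lemma hnormZ a x : hnorm ip (a *: x) = cabs a * hnorm ip x.
Proof.
have sq : hnorm ip (a *: x) ^+ 2 = (cabs a * hnorm ip x) ^+ 2.
  apply: complexI; rewrite -ip_self ipZl ipZr mulrA [a * _]mulrC mulJc.
  by rewrite ip_self -rmorphM -exprMn.
apply/eqP; rewrite -(@eqrXn2 _ 2) ?sq ?mulr_ge0 ?hnorm_ge0 ?cabs_ge0 //.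
Qed.

Lemma hnormD_sq u v :
  hnorm ip (u + v) ^+ 2 = hnorm ip u ^+ 2 + hnorm ip v ^+ 2 + 2 * complex.Re (ip u v).
Proof.
apply: complexI; rewrite -ip_self ipDl !ipDr !ip_self [ip v u]ipC.
rewrite !rmorphD /= [X in _ = _ + X]rmorphM /= (rmorph_nat (real_complex R)) -addcJ.
ring.
Qed.

Lemma hnorm_combination_sq a b u v :
  hnorm ip (a *: u + b *: v) ^+ 2 =
  cabs a ^+ 2 * hnorm ip u ^+ 2 + cabs b ^+ 2 * hnorm ip v ^+ 2
  + 2 * complex.Re (a * Num.conj b * ip u v).
Proof. by rewrite hnormD_sq !hnormZ !exprMn ipZl ipZr [a * (_ * _)]mulrA. Qed.

Lemma cauchy_schwarz x y : cabs (ip x y) <= hnorm ip x * hnorm ip y.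
Proof.
have [y0|y_neq0] := eqVneq (hnorm ip y) 0.
  by rewrite (hnorm_eq0 y0) ip0r cabs0 hnorm0 mulr0.
set n := hnorm ip y ^+ 2; set c := ip x y.
have n_gt0 : 0 < n by rewrite exprn_gt0 // lt0r y_neq0 hnorm_ge0.
(* Expand 0 <= ||n x - c y||^2, which equals n (n ||x||^2 - |c|^2). *)
have := sqr_ge0 (hnorm ip ((n%:C)%C *: x + (- c) *: y)).
rewrite hnorm_combination_sq cabs_real cabsN (gtr0_norm n_gt0) -/n.
rewrite rmorphN mulrN mulNr -mulrA mulJc -rmorphM -rmorphN /=.
have -> : n ^+ 2 * hnorm ip x ^+ 2 + cabs c ^+ 2 * n + 2 * - (n * cabs c ^+ 2) =
          n * (n * hnorm ip x ^+ 2 - cabs c ^+ 2) by ring.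
rewrite pmulr_rge0 // subr_ge0 /n -exprMn => le_sq.
by rewrite -(@ler_pXn2r _ 2) ?nnegrE ?mulr_ge0 ?hnorm_ge0 ?cabs_ge0 // mulrC.
Qed.

Lemma hnormD_le u v : hnorm ip (u + v) <= hnorm ip u + hnorm ip v.
Proof.
rewrite -(@ler_pXn2r _ 2) ?nnegrE ?addr_ge0 ?hnorm_ge0 // hnormD_sq sqrrD.
rewrite [leRHS]addrAC lerD2l mulr_natl lerMn2r /=.
exact: le_trans (Re_le_cabs _) (cauchy_schwarz u v).
Qed.

Lemma hnorm_combination_le a b u v :
  hnorm ip (a *: u + b *: v) ^+ 2 <=
  cabs a ^+ 2 * hnorm ip u ^+ 2 + cabs b ^+ 2 * hnorm ip v ^+ 2
  + 2 * (cabs a * cabs b * cabs (ip u v)).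
Proof.
rewrite hnorm_combination_sq lerD2l ler_wpM2l //.
by rewrite -(cabsJ b) -!cabsM Re_le_cabs.
Qed.

End InnerProductSpace.

Section OperatorBounds.
Variables (R : realType) (V : lmodType R[i]) (ip : V -> V -> R[i]).
Hypothesis ip_axioms : inner_product_axioms ip.
Local Open Scope classical_set_scope.
Variable S : V -> V.
Hypothesis S_bounded : exists M, forall x, hnorm ip (S x) <= M * hnorm ip x.
Hypothesis S_scalable : forall a x, S (a *: x) = a *: S x.

Lemma opnorm_le B :
  (forall x, hnorm ip x <= 1 -> hnorm ip (S x) <= B) -> opnorm ip S <= B.
Proof.
move=> SB; apply: ge_sup.
  by exists (hnorm ip (S 0)), 0 => //=; rewrite (hnorm0 ip_axioms) ler01.
by move=> _ [x x1 <-]; apply: SB.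
Qed.

Lemma hnorm_le_opnorm_ball x : hnorm ip x <= 1 -> hnorm ip (S x) <= opnorm ip S.
Proof.
move=> x1; apply: ub_le_sup; last by exists x.
case: S_bounded => M SM; exists `|M| => _ [y y1 <-].
apply: le_trans (SM y) (le_trans (ler_wpM2r (hnorm_ge0 _ _) (ler_norm M)) _).
exact: ler_piMr.
Qed.

Lemma opnorm_ge0 : 0 <= opnorm ip S.
Proof.
apply: le_trans (hnorm_ge0 ip (S 0)) (hnorm_le_opnorm_ball _).
by rewrite (hnorm0 ip_axioms).
Qed.

Lemma hnorm_normalized x :
  hnorm ip x != 0 -> hnorm ip (((hnorm ip x)^-1)%:C%C *: x) = 1.
Proof.
move=> x_neq0; rewrite (hnormZ ip_axioms) cabs_real ger0_norm ?invr_ge0 ?hnorm_ge0 //.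
by rewrite mulVf.
Qed.

Lemma hnorm_le_opnorm x : hnorm ip (S x) <= opnorm ip S * hnorm ip x.
Proof.
have [x0|x_neq0] := eqVneq (hnorm ip x) 0.
  by case: S_bounded => M /(_ x); rewrite x0 !mulr0.
have x_gt0 : 0 < hnorm ip x by rewrite lt0r x_neq0 hnorm_ge0.
have unit_le1 : hnorm ip (((hnorm ip x)^-1)%:C%C *: x) <= 1.
  by rewrite hnorm_normalized.
have := hnorm_le_opnorm_ball unit_le1.
rewrite S_scalable (hnormZ ip_axioms) cabs_real ger0_norm ?invr_ge0 ?hnorm_ge0 //.
by rewrite ler_pdivrMl // mulrC.
Qed.

Lemma numrad_ub x : hnorm ip x = 1 -> cabs (ip (S x) x) <= numrad ip S.
Proof.
move=> x1; apply: ub_le_sup; last by exists x.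
case: S_bounded => M SM; exists `|M| => _ [y y1 <-].
apply: le_trans (cauchy_schwarz ip_axioms _ _) _; rewrite y1 mulr1.
by apply: le_trans (SM y) _; rewrite y1 mulr1 ler_norm.
Qed.

Lemma numrad_ge0 : 0 <= numrad ip S.
Proof.
case: (pselect (exists x : V, hnorm ip x = 1)) => [[x x1]|no_unit].
  exact: le_trans (cabs_ge0 _) (numrad_ub x1).
rewrite /numrad; have -> : [set x | hnorm ip x = 1] = set0.
  by apply/seteqP; split=> // x x1; apply: no_unit; exists x.
by rewrite image_set0 sup0.
Qed.

Lemma cabs_ip_le_numrad x : cabs (ip (S x) x) <= numrad ip S * hnorm ip x ^+ 2.
Proof.
have [x0|x_neq0] := eqVneq (hnorm ip x) 0.
  by rewrite (hnorm_eq0 ip_axioms x0) (ip0r ip_axioms) cabs0 mulr_ge0 ?numrad_ge0 ?sqr_ge0.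
have x_gt0 : 0 < hnorm ip x ^+ 2 by rewrite exprn_gt0 // lt0r x_neq0 hnorm_ge0.
have := numrad_ub (hnorm_normalized x_neq0).
rewrite S_scalable (ipZl ip_axioms) (ipZr ip_axioms) mulrA !cabsM cabsJ cabs_real.
rewrite ger0_norm ?invr_ge0 ?hnorm_ge0 // -invfM -expr2.
by rewrite ler_pdivrMl // mulrC.
Qed.

End OperatorBounds.

Section Adjoint.
Variables (R : realType) (V : lmodType R[i]) (ip : V -> V -> R[i]).
Hypothesis ip_axioms : inner_product_axioms ip.
Variables T Ts : V -> V.
Hypothesis T_bounded_op : bounded_operator ip T.
Hypothesis T_adjoint : is_adjoint ip T Ts.

Let T_scalable : forall a x, T (a *: x) = a *: T x.
Proof. by case: T_bounded_op. Qed.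

Let T_bounded : exists M, forall x, hnorm ip (T x) <= M * hnorm ip x.
Proof. by case: T_bounded_op. Qed.

Let hnormT_le x : hnorm ip (T x) <= opnorm ip T * hnorm ip x.
Proof. exact: hnorm_le_opnorm. Qed.

Lemma hnorm_adjoint_le x : hnorm ip (Ts x) <= opnorm ip T * hnorm ip x.
Proof.
have sq : hnorm ip (Ts x) ^+ 2 <= opnorm ip T * hnorm ip (Ts x) * hnorm ip x.
  rewrite (hnorm_sq ip_axioms) -T_adjoint (le_trans (Re_le_cabs _)) //.
  rewrite (le_trans (cauchy_schwarz ip_axioms _ _)) // ler_wpM2r ?hnorm_ge0 //.
have [Ts_le0|Ts_gt0] := lerP (hnorm ip (Ts x)) 0.
  apply: le_trans Ts_le0 _.
  by rewrite mulr_ge0 ?hnorm_ge0 ?(opnorm_ge0 ip_axioms T_bounded).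
by move: sq; rewrite expr2 mulrAC [_ * hnorm ip x]mulrC ler_pM2r.
Qed.

Lemma hnorm_sq_add_adjoint_le x : hnorm ip x <= 1 ->
  hnorm ip (T x) ^+ 2 + hnorm ip (Ts x) ^+ 2
  <= opnorm ip (fun y => T (Ts y) + Ts (T y)).
Proof.
have sum_bounded :
    exists M, forall y, hnorm ip (T (Ts y) + Ts (T y)) <= M * hnorm ip y.
  exists (opnorm ip T ^+ 2 *+ 2) => y; rewrite mulrnAl mulr2n.
  apply: le_trans (hnormD_le ip_axioms _ _) (lerD _ _); rewrite expr2 -mulrA.
    apply: le_trans (hnormT_le _) _.
    by rewrite ler_wpM2l ?(opnorm_ge0 ip_axioms T_bounded) ?hnorm_adjoint_le.
  apply: le_trans (hnorm_adjoint_le _) _.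
  by rewrite ler_wpM2l ?(opnorm_ge0 ip_axioms T_bounded).
move=> x1.
have -> : hnorm ip (T x) ^+ 2 + hnorm ip (Ts x) ^+ 2 =
          complex.Re (ip (T (Ts x) + Ts (T x)) x).
  rewrite (ipDl ip_axioms) T_adjoint (ipC ip_axioms x) -(T_adjoint x).
  rewrite !(ip_self ip_axioms).
  by rewrite [Num.conj _]conjc_real -rmorphD /= addrC.
apply: le_trans (Re_le_cabs _) (le_trans (cauchy_schwarz ip_axioms _ _) _).
rewrite -[leRHS]mulr1 ler_pM ?hnorm_ge0 //.
exact: (hnorm_le_opnorm_ball (S := fun y => T (Ts y) + Ts (T y)) sum_bounded x1).
Qed.

Lemma cabs_ip_adjoint_le_numrad x : hnorm ip x <= 1 ->
  cabs (ip (T x) (Ts x)) <= numrad ip (fun y => T (T y)).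
Proof.
have TT_bounded : exists M, forall y, hnorm ip (T (T y)) <= M * hnorm ip y.
  exists (opnorm ip T ^+ 2) => y; rewrite expr2 -mulrA.
  apply: le_trans (hnormT_le _) _.
  by rewrite ler_wpM2l ?(opnorm_ge0 ip_axioms T_bounded).
have TT_scalable : forall a y, T (T (a *: y)) = a *: T (T y).
  by move=> a y; rewrite !T_scalable.
move=> x1; rewrite -T_adjoint.
apply: le_trans (cabs_ip_le_numrad ip_axioms TT_bounded TT_scalable x) _.
rewrite ler_piMr ?(numrad_ge0 ip_axioms TT_bounded) //.
by rewrite exprn_ile1 ?hnorm_ge0.
Qed.

End Adjoint.

Section WeightedSquares.
Variables (R : realFieldType) (A B a b K : R).
Hypotheses (A_ge0 : 0 <= A) (B_ge0 : 0 <= B) (AB_le1 : A ^+ 2 + B ^+ 2 <= 1).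

Lemma weighted_sq_le_sum_sq : K <= a * b ->
  A ^+ 2 * a ^+ 2 + B ^+ 2 * b ^+ 2 + 2 * (A * B * K) <= a ^+ 2 + b ^+ 2.
Proof.
move=> K_le; have AB_ge0 : 0 <= A * B by rewrite mulr_ge0.
have := ler_wpM2l AB_ge0 K_le; have := sqr_ge0 (A * b - B * a).
have : (A ^+ 2 + B ^+ 2) * (a ^+ 2 + b ^+ 2) <= a ^+ 2 + b ^+ 2.
  by rewrite ler_piMl ?addr_ge0 ?sqr_ge0.
nra.
Qed.

Lemma weighted_sq_le_bound (s w : R) : 0 <= a <= s -> 0 <= b <= s -> 0 <= K <= w ->
  A ^+ 2 * a ^+ 2 + B ^+ 2 * b ^+ 2 + 2 * (A * B * K) <= s ^+ 2 + w.
Proof.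
move=> /andP[a_ge0 a_le] /andP[b_ge0 b_le] /andP[K_ge0 K_le].
have w_ge0 := le_trans K_ge0 K_le.
have cross : 2 * (A * B * K) <= (A ^+ 2 + B ^+ 2) * w.
  have := ler_wpM2l (mulr_ge0 A_ge0 B_ge0) K_le; have := sqr_ge0 (A - B).
  nra.
have diag : A ^+ 2 * a ^+ 2 + B ^+ 2 * b ^+ 2 <= (A ^+ 2 + B ^+ 2) * s ^+ 2.
  rewrite mulrDl lerD // ler_wpM2l ?sqr_ge0 // ler_pXn2r ?nnegrE //.
    exact: le_trans a_le.
  exact: le_trans b_le.
have : (A ^+ 2 + B ^+ 2) * (s ^+ 2 + w) <= s ^+ 2 + w.
  by rewrite ler_piMl ?addr_ge0 ?sqr_ge0.
lra.
Qed.

End WeightedSquares.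

Lemma dragomir_le_sqrt (R : realType) (V : lmodType R[i]) (ip : V -> V -> R[i])
    (ip_axioms : inner_product_axioms ip) (T Ts : V -> V) (r : R) :
  (forall a b x, cabs a ^+ 2 + cabs b ^+ 2 <= 1 -> hnorm ip x <= 1 ->
     hnorm ip (a *: T x + b *: Ts x) ^+ 2 <= r) ->
  dragomir ip T Ts <= Num.sqrt r.
Proof.
move=> bound; apply: ge_sup.
  exists (opnorm ip (fun x => 0 *: T x + 0 *: Ts x)), (0, 0) => //=.
  by rewrite cabs0 expr0n addr0.
move=> _ [[a b] /= ab_le1 <-]; apply: (opnorm_le ip_axioms) => x x_le1.
by rewrite -(ger0_norm (hnorm_ge0 ip _)) -sqrtr_sqr ler_wsqrtr ?bound.
Qed.

Unset Implicit Arguments.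
Set Strict Implicit.

Theorem theorem3p3 (R : realType) (V : lmodType R[i]) (ip : V -> V -> R[i])
  (HH : hilbert_space ip) (T Ts : V -> V)
  (HT : bounded_operator ip T) (HTs : is_adjoint ip T Ts) :
  dragomir ip T Ts <=
  Num.min (Num.sqrt (opnorm ip (fun x => T (Ts x) + Ts (T x))))
          (Num.sqrt (opnorm ip T ^+ 2 + numrad ip (fun x => T (T x)))).
Proof.
have [ip_axioms _] := HH; have [_ _ T_bounded] := HT.
rewrite le_min; apply/andP; split;
  apply: (dragomir_le_sqrt ip_axioms) => a b x ab_le1 x_le1;
  apply: le_trans (hnorm_combination_le ip_axioms a b (T x) (Ts x)) _.
- apply: le_trans (hnorm_sq_add_adjoint_le ip_axioms HT HTs x_le1).
  by rewrite weighted_sq_le_sum_sq ?cabs_ge0 ?cauchy_schwarz.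
- have Tx_le := hnorm_le_opnorm_ball T_bounded x_le1.
  have Tsx_le := le_trans (hnorm_adjoint_le ip_axioms HT HTs x)
                   (ler_piMr (opnorm_ge0 ip_axioms T_bounded) x_le1).
  have K_le := cabs_ip_adjoint_le_numrad ip_axioms HT HTs x_le1.
  by rewrite weighted_sq_le_bound ?cabs_ge0 ?hnorm_ge0 ?Tx_le ?Tsx_le ?K_le.
Qed.
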